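(* Let $n\ge1$, $K\ge1$ and $p_n\in[0,1]$. Let $(\mathcal{G}(n),\mathcal{A}_1(n),\dots,\mathcal{A}_K(n))$ be the output of the SFAP exploration algorithm, and let $\mathcal{N}_i(n)$ be the set of vertices using frequency $i$ in the final state of the SFAP model on $G(n,p_n)$ (both described in the context). Then the joint distribution of $(\mathcal{G}(n),\mathcal{A}_1(n),\dots,\mathcal{A}_K(n))$ is identical to that of $(G(n,p_n),\mathcal{N}_1(n),\dots,\mathcal{N}_K(n))$.
   Context: $G(n,p_n)$ is the Erdős–Rényi random graph on $[n]$ with independent edge probability $p_n$. SFAP (sequential frequency assignment) model: given a realization of $G(n,p_n)$, all vertices start with no frequency ($f_v(0)=0$). At each step a vertex $v$ is chosen uniformly at random among vertices not selected before; if the set $\{1,\dots,K\}\setminus\{f_u: u \text{ a neighbour of } v,\ f_u\ne0\}$ is nonempty, $v$ receives its minimum as frequency; otherwise $v$ gets frequency $0$ (frozen). $\mathcal{N}_i(n)$ is the set of vertices with frequency $i$ after $n$ steps. SFAP exploration algorithm: maintain $\mathcal{A}_k(t)$ ($1\le k\le K$: explored vertices with frequency $k$; $\mathcal{A}_0(t)$: explored frozen vertices) and unexplored set $\mathcal{U}(t)$, initially $\mathcal{A}_k(0)=\varnothing$, $\mathcal{U}(0)=[n]$. At step $t+1$, select $v\in\mathcal{U}(t)$ uniformly at random, remove it from $\mathcal{U}$, and join it to each vertex of $\mathcal{A}(t)=\bigcup_{k=0}^K\mathcal{A}_k(t)$ independently with probability $p_n$. If $\mathcal{F}_v=\{1,\dots,K\}\setminus\{k\ge1: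 v\text{ joined to some vertex of }\mathcal{A}_k(t)\}$ is nonempty, $v$ joins $\mathcal{A}_{\min\mathcal{F}_v}$; otherwise $v$ joins $\mathcal{A}_0$. After $n$ steps the algorithm outputs $(\mathcal{A}_1(n),\dots,\mathcal{A}_K(n))$ and the graph $\mathcal{G}(n)$ on $[n]$ of all edges added. *)

From HB Require Import structures.
From mathcomp Require Import all_boot all_order all_algebra.
Set Implicit Arguments. Unset Strict Implicit. Unset Printing Implicit Defensive.
Import Order.TTheory GRing.Theory Num.Theory.
Local Open Scope ring_scope.

(* A graph on [n] = 'I_n is its edge set: a set of 2-element subsets.
   A frequency state is f : 'I_n -> option 'I_K.+1 :
   None = not yet selected/explored, Some 0 = frozen, Some k (1<=k<=K) = frequency k. *)
Definition graph (n : nat) := {set {set 'I_n}}.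
Definition fstate (n K : nat) := {ffun 'I_n -> option 'I_K.+1}.

Definition used_freqs (n K : nat) (f : fstate n K) (adj : pred 'I_n) : pred nat :=
  fun i => [&& [exists u, adj u && (f u == Some (inord i))], (0 < i)%N & (i <= K)%N].

(* min of {1..K} \ used, or 0 (frozen) if this set is empty *)
Definition new_freq (K : nat) (used : pred nat) : 'I_K.+1 :=
  let j := find (fun i => ~~ used i) (iota 1 K) in
  inord (if (j < K)%N then j.+1 else 0%N).

Definition unselected (n K : nat) (f : fstate n K) : {set 'I_n} := [set u | f u == None].
Definition selected (n K : nat) (f : fstate n K) : {set 'I_n} := [set u | f u != None].

(* Output (N_1,...,N_K) / (A_1,...,A_K): component k : 'I_K is frequency k+1. *)
Definition freq_sets (n K : nat) (f : fstate n K) : {ffun 'I_K -> {set 'I_n}} :=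
  [ffun k : 'I_K => [set v | f v == Some (inord k.+1)]].

Definition gnp_prob (R : realFieldType) (n : nat) (p : R) (E : graph n) : R :=
  if E \subset [set e : {set 'I_n} | #|e| == 2%N]
  then p ^+ #|E| * (1 - p) ^+ ('C(n, 2) - #|E|)%N
  else 0.

Definition sfap_update (n K : nat) (E : graph n) (f : fstate n K) (v : 'I_n) : fstate n K :=
  [ffun u => if u == v
             then Some (new_freq K (used_freqs f (fun w => [set w; v] \in E)))
             else f u].

Definition sfap_kernel (R : realFieldType) (n K : nat) (E : graph n)
  (f f' : fstate n K) : R :=
  \sum_(v in unselected f) (sfap_update E f v == f')%:R / #|unselected f|%:R.

Fixpoint sfap_dist (R : realFieldType) (n K : nat) (E : graph n) (t : nat)
  : fstate n K -> R :=
  match t with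
  | 0 => fun f => (f == [ffun => None])%:R
  | t'.+1 => fun f' => \sum_(f : fstate n K) sfap_dist R E t' f * sfap_kernel R E f f'
  end.

Definition sfap_law (R : realFieldType) (n K : nat) (p : R)
  (E : graph n) (A : {ffun 'I_K -> {set 'I_n}}) : R :=
  \sum_(E' : graph n) \sum_(f : fstate n K | (E' == E) && (freq_sets f == A))
     gnp_prob p E' * sfap_dist R E' n f.

(* state: (frequency state: None = in U, Some k = in A_k ; edges added so far) *)
Definition estate (n K : nat) := (fstate n K * graph n)%type.

Definition explore_update (n K : nat) (s : estate n K) (v : 'I_n) (S : {set 'I_n})
  : estate n K :=
  ([ffun u => if u == v
              then Some (new_freq K (used_freqs s.1 (fun w => w \in S)))
              else s.1 u],
   s.2 :|: [set [set v; w] | w in S]).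

Definition explore_kernel (R : realFieldType) (n K : nat) (p : R)
  (s s' : estate n K) : R :=
  \sum_(v in unselected s.1) \sum_(S : {set 'I_n} | S \subset selected s.1)
     (explore_update s v S == s')%:R / #|unselected s.1|%:R
       * (p ^+ #|S| * (1 - p) ^+ (#|selected s.1| - #|S|)%N).

Fixpoint explore_dist (R : realFieldType) (n K : nat) (p : R) (t : nat)
  : estate n K -> R :=
  match t with
  | 0 => fun s => (s == ([ffun => None], set0))%:R
  | t'.+1 => fun s' => \sum_(s : estate n K) explore_dist p t' s * explore_kernel p s s'
  end.

Definition explore_law (R : realFieldType) (n K : nat) (p : R)
  (E : graph n) (A : {ffun 'I_K -> {set 'I_n}}) : R :=
  \sum_(s : estate n K | (s.2 == E) && (freq_sets s.1 == A)) explore_dist p n s.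

(* Run SFAP on a sample E of G(n,p) and record, alongside, the subgraph of E
   induced by the vertices selected so far.  This pair evolves exactly like the
   exploration algorithm.  The run up to time t depends only on the edges
   between selected vertices, so the edges from the next (uniformly chosen)
   vertex v to the selected ones are independent Bernoulli(p) variables,
   independent of the past; they determine both the frequency of v and the
   newly revealed edges.  After n steps every vertex is selected and the
   recorded subgraph is E itself.  The argument is an identity of finite sums
   and needs none of the hypotheses on n, K and p. *)

From HB Require Import structures.
From mathcomp Require Import all_boot all_order all_algebra.
From mathcomp Require Import ring.
Set Implicit Arguments. Unset Strict Implicit. Unset Printing Implicit Defensive.
Import Order.TTheory GRing.Theory Num.Theory.
Local Open Scope ring_scope.

Section ProductLaw.
Variables (R : realFieldType) (I : finType) (q : I -> bool -> R).
Hypothesis q_sum1 : forall i, q i true + q i false = 1.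

(* [q i b] is the probability that the random set contains [i] (b = true) or
   not (b = false), independently over [i]; [weight B E] is then the probability
   that the random set meets [B] exactly as [E] does. *)
Definition weight (B E : {set I}) : R := \prod_(i in B) q i (i \in E).

Definition prod_law (E : {set I}) : R := \prod_i q i (i \in E).

Lemma prod_law_split (B E : {set I}) : prod_law E = weight B E * weight (~: B) E.
Proof.
rewrite /prod_law /weight (bigID (mem B)) /=; congr (_ * _).
by apply: eq_bigl => i; rewrite inE.
Qed.

Lemma sum_weight (B : {set I}) : \sum_(T : {set I} | T \subset B) weight B T = 1.
Proof.
(* Expand [1 = \prod_(i in B) (q i true + q i false)] into a sum over subsets. *)
have := @bigA_distr R 0 1 *%R +%R I
  (fun i => if i \in B then q i true else 0)
  (fun i => if i \in B then q i false else 1).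
rewrite big1 => [|i _]; last by case: (i \in B) => /=; rewrite ?q_sum1 ?add0r.
move=> ->.
rewrite big_mkcond; apply: eq_bigr => J _.
case: (boolP (J \subset B)) => [/subsetP JB | /subsetPn[i iJ iB]]; last first.
  by rewrite (bigD1 i) //= iJ (negbTE iB) mul0r.
rewrite /weight [RHS](bigID (mem B)) /= [X in _ = _ * X]big1 ?mulr1 => [|i iB].
  by apply: eq_bigr => i ->; case: (i \in J).
by rewrite (negbTE iB); case: ifP => // /JB; rewrite (negbTE iB).
Qed.

Lemma sum_prod_law_trace (B T : {set I}) (h : {set I} -> R) :
  T \subset B -> (forall E, h E = h (E :\: B)) ->
  \sum_(E | E :&: B == T) prod_law E * h E
    = weight B T * \sum_(D | D :&: B == set0) weight (~: B) D * h D.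
Proof.
move=> /subsetP TB hB.
rewrite (reindex_onto (fun D => D :|: T) (fun E => E :\: B)) => [|E /eqP <-]; last first.
  by apply/setP => x; rewrite !inE; case: (x \in E); case: (x \in B).
rewrite big_distrr /=; apply: congr_big => [//|D|D /andP[_ /eqP DB]].
  apply/andP/eqP => [[_ /eqP/setP DTB]|/setP DB].
    by apply/setP => x; move: (DTB x); rewrite !inE; case: (x \in D); case: (x \in B).
  split; apply/eqP/setP => x; move: (DB x) (TB x); rewrite !inE;
    by case: (x \in D); case: (x \in B); case: (x \in T) => //= _ ->.
have DnB x : x \in D -> x \notin B by rewrite -DB inE => /andP[].
rewrite (prod_law_split B) mulrA; congr (_ * _ * _).
- apply: eq_bigr => i iB; rewrite inE.
  by rewrite (negbTE (contraL (DnB i) iB)).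
- apply: eq_bigr => i; rewrite !inE => iB.
  by rewrite (negbTE (contra (TB i) iB)) orbF.
- by rewrite hB DB.
Qed.

(* The trace of the random set on [B] is independent of its part outside [B]. *)
Lemma sum_prod_law_trace_indep (B T : {set I}) (h : {set I} -> R) :
  T \subset B -> (forall E, h E = h (E :\: B)) ->
  \sum_E prod_law E * h E * (E :&: B == T)%:R = weight B T * \sum_E prod_law E * h E.
Proof.
move=> TB hB.
have -> : \sum_E prod_law E * h E * (E :&: B == T)%:R
          = \sum_(E | E :&: B == T) prod_law E * h E.
  by rewrite [RHS]big_mkcond; apply: eq_bigr => E _; case: eqP; rewrite ?mulr1 ?mulr0.
rewrite sum_prod_law_trace //; congr (_ * _).
rewrite [RHS](partition_big (fun E => E :&: B) (fun T' => T' \subset B)) => [|E _]; last exact: subsetIr.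
under [RHS]eq_bigr => T' T'B do rewrite sum_prod_law_trace //.
by rewrite -big_distrl /= sum_weight mul1r.
Qed.

End ProductLaw.

Section GraphOperations.
Variable n : nat.

Definition induced (X : {set 'I_n}) (E : graph n) : graph n :=
  [set e in E | (e \subset X) && (#|e| == 2%N)].

Definition star (v : 'I_n) (S : {set 'I_n}) : graph n := [set [set v; w] | w in S].

Definition nbrs (E : graph n) (X : {set 'I_n}) (v : 'I_n) : {set 'I_n} :=
  [set w in X | [set w; v] \in E].

Lemma set2_inj (v : 'I_n) : injective (fun w => [set v; w]).
Proof.
move=> w1 w2 /= eqv.
have : w1 \in [set v; w2] by rewrite -eqv !inE eqxx orbT.
have : w2 \in [set v; w1] by rewrite eqv !inE eqxx orbT.
by rewrite !inE => /orP[/eqP->|/eqP->//] /orP[/eqP->|/eqP->//].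
Qed.

Lemma star_inj v : injective (star v).
Proof. exact: imset_inj (@set2_inj v). Qed.

Lemma induced_set0 (E : graph n) : induced set0 E = set0.
Proof.
apply/setP => e; rewrite !inE subset0.
by case: eqP => [->|]; rewrite ?cards0 ?andbF.
Qed.

Lemma induced_induced (X Y : {set 'I_n}) (E : graph n) :
  Y \subset X -> induced Y (induced X E) = induced Y E.
Proof.
move=> YX; apply/setP => e; rewrite !inE.
case: (e \in E); case eY: (e \subset Y); rewrite /= ?andbF //.
by rewrite (subset_trans eY YX) /= andbb.
Qed.

Lemma setI_star (E : graph n) (X : {set 'I_n}) v : E :&: star v X = star v (nbrs E X v).
Proof.
apply/setP => e; rewrite inE; apply/andP/imsetP => [[eE /imsetP[w wX ew]]|[w]].
  by exists w; rewrite // inE wX setUC -ew.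
by rewrite inE setUC => /andP[wX wE] ->; split; last exact: imset_f.
Qed.

Lemma induced_setU1 (E : graph n) (X : {set 'I_n}) v : v \notin X ->
  induced (v |: X) E = induced X E :|: star v (nbrs E X v).
Proof.
move=> vX; apply/setP => e; rewrite !inE; apply/idP/idP.
  case/andP=> eE /andP[sub c2].
  case: (boolP (v \in e)) => ve.
    case/cards2P: c2 => x [y [xy ee]].
    have [w [ew wv]] : exists w, e = [set v; w] /\ w != v.
      move: xy ve; rewrite ee !inE => xy /orP[/eqP vx|/eqP vy].
        by exists y; split; [rewrite vx | rewrite eq_sym vx].
      by exists x; split; [rewrite setUC vy | rewrite vy].
    have wX : w \in X.
      by move/subsetP: sub => /(_ w); rewrite ew !inE eqxx orbT (negbTE wv) => /(_ isT).
    by apply/orP; right; apply/imsetP; exists w; rewrite // inE wX /= setUC -ew.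
  apply/orP; left; rewrite eE /= c2 andbT.
  apply/subsetP => x xe; move/subsetP: sub => /(_ x xe); rewrite !inE.
  by case/orP=> [/eqP xv|//]; move: ve; rewrite -xv xe.
case/orP => [/andP[eE /andP[sub c2]]|/imsetP[w]].
  by rewrite eE c2 andbT (subset_trans sub (subsetU1 _ _)).
rewrite inE => /andP[wX wvE] ->.
have wv : w != v by apply: contraNneq vX => <-.
rewrite setUC wvE cards2 wv andbT setUC.
by apply/subsetP => x; rewrite !inE => /orP[->//|/eqP->]; rewrite wX orbT.
Qed.

Lemma induced_setT (E : graph n) :
  E \subset [set e : {set 'I_n} | #|e| == 2%N] -> induced setT E = E.
Proof.
move=> /subsetP E2; apply/setP => e; rewrite !inE subsetT.
by case eE: (e \in E) => //=; have := E2 e eE; rewrite inE.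
Qed.

Lemma induced_setD_star (E : graph n) (X : {set 'I_n}) v : v \notin X ->
  induced X (E :\: star v X) = induced X E.
Proof.
move=> vX; apply/setP => e; rewrite !inE.
case sub: (e \subset X); rewrite ?andbF //=.
suff -> : e \notin star v X by [].
apply/imsetP => -[w _ ew]; move/subsetP: sub => /(_ v).
by rewrite ew !inE eqxx (negbTE vX) => /(_ isT).
Qed.

End GraphOperations.

Section RandomGraph.
Variables (R : realFieldType) (n : nat) (p : R).

Definition edge_prob (e : {set 'I_n}) (b : bool) : R :=
  if #|e| == 2%N then (if b then p else 1 - p) else (if b then 0 else 1).

Lemma edge_prob_sum1 e : edge_prob e true + edge_prob e false = 1.
Proof. by rewrite /edge_prob; case: ifP; rewrite ?add0r // addrC subrK. Qed.

Lemma gnp_probE (E : graph n) : gnp_prob p E = prod_law edge_prob E.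
Proof.
rewrite /gnp_prob /prod_law (bigID (mem E)) /=.
case: ifP => [/subsetP E2|/subsetPn[e eE]]; last first.
  by rewrite inE => e2; rewrite (bigD1 e) //= eE /edge_prob (negbTE e2) !mul0r.
rewrite (eq_bigr (fun _ => p)) => [|e eE]; last first.
  by rewrite eE /edge_prob; move: (E2 e eE); rewrite inE => ->.
rewrite prodr_const (bigID (fun e : {set 'I_n} => #|e| == 2%N)) /=.
rewrite [X in _ * (_ * X)]big1 ?mulr1 => [|e /andP[/negbTE-> /negbTE e2]]; last first.
  by rewrite /edge_prob e2.
rewrite (eq_bigr (fun _ => 1 - p)) => [|e /andP[/negbTE-> e2]]; last first.
  by rewrite /edge_prob e2.
rewrite prodr_const; congr (_ * _ ^+ _).
have -> : #|[pred e : {set 'I_n} | (e \notin E) && (#|e| == 2%N)]|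
          = #|[set e : {set 'I_n} | #|e| == 2%N] :\: E|.
  by apply: eq_card => e; rewrite !inE andbC.
by rewrite cardsD card_draws card_ord (setIidPr (introT subsetP E2)).
Qed.

Lemma gnp_prob_sum1 : \sum_(E : graph n) gnp_prob p E = 1.
Proof.
rewrite -(sum_weight edge_prob_sum1 setT).
apply: congr_big => [//|E|E _]; first by rewrite subsetT.
by rewrite gnp_probE /prod_law /weight; apply: eq_bigl => e; rewrite inE.
Qed.

Lemma weight_star (X S : {set 'I_n}) v : S \subset X -> v \notin X ->
  weight edge_prob (star v X) (star v S) = p ^+ #|S| * (1 - p) ^+ (#|X| - #|S|).
Proof.
move=> SX vX.
have pairs e : e \in star v X -> #|e| == 2%N.
  by case/imsetP=> w wX ->; rewrite cards2 (_ : v != w) //; apply: contraNneq vX => ->.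
have sub : star v S \subset star v X by apply: imsetS.
rewrite /weight (big_setID (star v S)) /= (setIidPr sub).
rewrite (eq_bigr (fun _ => p)) => [|e eS]; last first.
  by rewrite eS /edge_prob (pairs e (subsetP sub e eS)).
rewrite [X in _ * X = _](eq_bigr (fun _ => 1 - p)) => [|e]; last first.
  by rewrite inE => /andP[/negbTE eS eX]; rewrite eS /edge_prob (pairs e eX).
by rewrite !prodr_const cardsD (setIidPr sub) !card_imset //; exact: set2_inj.
Qed.

(* In G(n,p) the neighbourhood of a vertex v in a set X not containing v is a
   binomial random subset of X, independent of the edges not incident to v. *)
Lemma sum_gnp_nbrs (X S : {set 'I_n}) v (h : graph n -> R) :
  S \subset X -> v \notin X -> (forall E, h E = h (E :\: star v X)) ->
  \sum_E gnp_prob p E * h E * (nbrs E X v == S)%:R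
    = p ^+ #|S| * (1 - p) ^+ (#|X| - #|S|) * \sum_E gnp_prob p E * h E.
Proof.
move=> SX vX hX; under eq_bigr do rewrite gnp_probE -(inj_eq (@star_inj _ v)) -setI_star.
under [in RHS]eq_bigr do rewrite gnp_probE.
by rewrite -(weight_star SX vX) sum_prod_law_trace_indep ?imsetS //; exact: edge_prob_sum1.
Qed.

End RandomGraph.

Section Sfap.
Variables (R : realFieldType) (n K : nat).
Implicit Types (E : graph n) (f : fstate n K) (X S : {set 'I_n}) (v : 'I_n).

Definition assign_freq f v S : fstate n K :=
  [ffun u => if u == v then Some (new_freq K (used_freqs f (fun w => w \in S))) else f u].

Lemma eq_new_freq f (a1 a2 : pred 'I_n) :
  (forall u, f u != None -> a1 u = a2 u) ->
  new_freq K (used_freqs f a1) = new_freq K (used_freqs f a2).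
Proof.
move=> a12; rewrite /new_freq (@eq_find _ _ (fun i => ~~ used_freqs f a2 i)) // => i.
rewrite /used_freqs; congr (~~ [&& _, _ & _]); apply: eq_existsb => u.
by case: (eqVneq (f u) None) => [-> | /a12->]; rewrite ?andbF.
Qed.

Lemma in_unselected f v : (v \in unselected f) = (v \notin selected f).
Proof. by rewrite !inE negbK. Qed.

Lemma selected_empty : selected ([ffun => None] : fstate n K) = set0.
Proof. by apply/setP => u; rewrite !inE ffunE. Qed.

Lemma selected_sfap_update E f v : selected (sfap_update E f v) = v |: selected f.
Proof. by apply/setP => u; rewrite !inE ffunE; case: (u == v). Qed.

Lemma sfap_update_nbrs E f v : sfap_update E f v = assign_freq f v (nbrs E (selected f) v).
Proof.
apply/ffunP => u; rewrite !ffunE; case: eqP => // _.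
by congr Some; apply: eq_new_freq => w fw; rewrite !inE fw.
Qed.

Lemma nbrs_induced E X Y v : v |: Y \subset X -> v \notin Y ->
  nbrs (induced X E) Y v = nbrs E Y v.
Proof.
move=> /subsetP YX vY; apply/setP => w; rewrite !inE.
case wY: (w \in Y) => //=.
have wv : w != v by apply: contraTneq wY => ->.
rewrite cards2 wv andbT andb_idr // => _.
by apply/subsetP => x; rewrite !inE => /orP[] /eqP->; apply: YX; rewrite !inE ?wY ?orbT ?eqxx.
Qed.

Lemma sfap_update_induced E X f v : v \in unselected f -> v |: selected f \subset X ->
  sfap_update (induced X E) f v = sfap_update E f v.
Proof.
by rewrite in_unselected => vU sub; rewrite !sfap_update_nbrs nbrs_induced.
Qed.

Lemma sfap_kernel_induced E f0 f :
  sfap_kernel R (induced (selected f) E) f0 f = sfap_kernel R E f0 f.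
Proof.
apply: eq_bigr => v vU; congr (_%:R / _).
have [sel|nsel] := eqVneq (selected f) (v |: selected f0).
  by rewrite sel sfap_update_induced.
have upd_ne E' : (sfap_update E' f0 v == f) = false.
  by apply: contraNF nsel => /eqP <-; rewrite selected_sfap_update.
by rewrite !upd_ne.
Qed.

Lemma sfap_kernel_eq0 E f0 f :
  ~~ (selected f0 \subset selected f) -> sfap_kernel R E f0 f = 0.
Proof.
move=> nsub; apply: big1 => v _; case: eqP => [upd|_]; last by rewrite mul0r.
by case/negP: nsub; rewrite -upd selected_sfap_update subsetUr.
Qed.

Lemma sfap_dist_eq0 E t f : #|selected f| != t -> sfap_dist R E t f = 0.
Proof.
elim: t f => [|t IH] f /=.
  by apply: contraNeq; rewrite pnatr_eq0 eqb0 negbK => /eqP->; rewrite selected_empty cards0.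
move=> ft; apply: big1 => f0 _.
have [f0t|/IH->] := eqVneq #|selected f0| t; last by rewrite mul0r.
rewrite /sfap_kernel big1 ?mulr0 // => v vU.
case: eqP => [upd|_]; last by rewrite mul0r.
by move: ft; rewrite -upd selected_sfap_update cardsU1 -in_unselected vU f0t eqxx.
Qed.

Lemma sfap_dist_induced E t f :
  sfap_dist R E t f = sfap_dist R (induced (selected f) E) t f.
Proof.
elim: t E f => [//|t IH] E f /=; apply: eq_bigr => f0 _.
rewrite sfap_kernel_induced.
have [sub|/sfap_kernel_eq0->] := boolP (selected f0 \subset selected f); last by rewrite !mulr0.
by rewrite IH [in RHS]IH induced_induced.
Qed.

End Sfap.

Section Coupling.
Variables (R : realFieldType) (n K : nat) (p : R).
Implicit Types (E G : graph n) (f : fstate n K) (S : {set 'I_n}) (v : 'I_n).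

Local Notation bernoulli_weight X S := (p ^+ #|S| * (1 - p) ^+ (#|X| - #|S|)).

(* Couples the exploration with SFAP run on E drawn from G(n,p): the explored
   graph is the subgraph of E induced by the selected vertices. *)
Definition coupled_dist t f G : R :=
  \sum_E (induced (selected f) E == G)%:R * gnp_prob p E * sfap_dist R E t f.

Lemma sum_coupled_dist t f (k : graph n -> R) :
  \sum_G coupled_dist t f G * k G
    = \sum_E gnp_prob p E * sfap_dist R E t f * k (induced (selected f) E).
Proof.
under eq_bigr do rewrite big_distrl.
rewrite exchange_big; apply: eq_bigr => E _ /=.
rewrite (bigD1 (induced (selected f) E)) //= eqxx big1 ?addr0 => [|G]; first by rewrite mul1r.
by rewrite eq_sym => /negbTE->; rewrite !mul0r.
Qed.

Lemma explore_kernelE (s s' : estate n K) :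
  explore_kernel p s s' = \sum_(v in unselected s.1) #|unselected s.1|%:R^-1 *
    \sum_(S : {set 'I_n} | S \subset selected s.1)
      (explore_update s v S == s')%:R * bernoulli_weight (selected s.1) S.
Proof. by apply: eq_bigr => v _; rewrite big_distrr /=; apply: eq_bigr => S _; ring. Qed.

Lemma sfap_kernelE E f f' : sfap_kernel R E f f'
  = \sum_(v in unselected f) #|unselected f|%:R^-1 * (sfap_update E f v == f')%:R.
Proof. by apply: eq_bigr => v _; rewrite mulrC. Qed.

Lemma explore_step_coupled t f f' G' v : v \in unselected f ->
  \sum_E gnp_prob p E * sfap_dist R E t f *
    \sum_(S : {set 'I_n} | S \subset selected f)
      (explore_update (f, induced (selected f) E) v S == (f', G'))%:R
        * bernoulli_weight (selected f) S
  = \sum_E (induced (selected f') E == G')%:R * gnp_prob p E * sfap_dist R E t f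
      * (sfap_update E f v == f')%:R.
Proof.
rewrite in_unselected; set X := selected f => vX.
pose h S E := sfap_dist R E t f *
  ((assign_freq f v S == f')%:R * (induced X E :|: star v S == G')%:R).
have hX S E : h S E = h S (E :\: star v X).
  by rewrite /h induced_setD_star // sfap_dist_induced [in RHS]sfap_dist_induced induced_setD_star.
transitivity (\sum_(S : {set 'I_n} | S \subset X) bernoulli_weight X S * \sum_E gnp_prob p E * h S E).
  under eq_bigr do rewrite big_distrr.
  rewrite exchange_big; apply: eq_bigr => S _; rewrite big_distrr; apply: eq_bigr => E _ /=.
  by rewrite xpair_eqE -mulnb natrM /h; ring.
under eq_bigr => S SX do rewrite -(sum_gnp_nbrs _ SX vX (hX S)).
rewrite exchange_big; apply: eq_bigr => E _.
rewrite (bigD1 (nbrs E X v)) /=; last by apply/subsetP => w; rewrite inE => /andP[].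
rewrite big1 ?addr0 => [|S /andP[_ /negbTE]]; last by rewrite eq_sym => ->; rewrite mulr0.
rewrite eqxx mulr1 /h -sfap_update_nbrs.
have [upd|_] := eqVneq (sfap_update E f v) f'; last by rewrite !(mul0r, mulr0).
by rewrite -upd selected_sfap_update induced_setU1 //; ring.
Qed.

Lemma explore_kernel_coupled t f0 f G :
  \sum_E gnp_prob p E * sfap_dist R E t f0 * explore_kernel p (f0, induced (selected f0) E) (f, G)
  = \sum_E (induced (selected f) E == G)%:R * gnp_prob p E
      * (sfap_dist R E t f0 * sfap_kernel R E f0 f).
Proof.
under eq_bigr do rewrite explore_kernelE big_distrr /=.
under [RHS]eq_bigr do rewrite sfap_kernelE !big_distrr /=.
rewrite exchange_big [in RHS]exchange_big; apply: eq_bigr => v vU.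
under eq_bigr do rewrite mulrCA.
under [in RHS]eq_bigr do rewrite mulrA mulrCA.
by rewrite -!big_distrr /= explore_step_coupled.
Qed.

Lemma explore_dist_coupled t f G : explore_dist p t (f, G) = coupled_dist t f G.
Proof.
elim: t f G => [|t IH] f G /=.
  rewrite /coupled_dist /= xpair_eqE; have [->|_] := eqVneq f [ffun => None]; last first.
    by rewrite big1 // => E _; rewrite mulr0.
  under eq_bigr do rewrite selected_empty induced_set0 eq_sym mulr1.
  by rewrite -big_distrr /= gnp_prob_sum1 mulr1.
rewrite (eq_bigr (fun s => explore_dist p t (s.1, s.2) * explore_kernel p (s.1, s.2) (f, G)))
  => [|[] //].
rewrite -(pair_bigA _ (fun f0 G0 => explore_dist p t (f0, G0) * explore_kernel p (f0, G0) (f, G))).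
under eq_bigr do under eq_bigr do rewrite IH.
under eq_bigr do rewrite sum_coupled_dist.
rewrite /coupled_dist /=; under [RHS]eq_bigr do rewrite big_distrr.
by rewrite [RHS]exchange_big; apply: eq_bigr => f0 _; rewrite explore_kernel_coupled.
Qed.

(* After n steps every vertex is selected, and G(n,p) only has pairs as edges. *)
Lemma induced_selected_final E f G :
  gnp_prob p E * sfap_dist R E n f * (induced (selected f) E == G)%:R
    = gnp_prob p E * sfap_dist R E n f * (E == G)%:R.
Proof.
have [-> | g0] := eqVneq (gnp_prob p E) 0; first by rewrite !mul0r.
have [-> | s0] := eqVneq (sfap_dist R E n f) 0; first by rewrite mulr0 !mul0r.
have selT : selected f = setT.
  apply/eqP; rewrite eqEcard subsetT cardsT card_ord.
  by apply: contraNT s0 => small; apply/eqP/sfap_dist_eq0; rewrite neq_ltn ltnNge small.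
have E2 : E \subset [set e : {set 'I_n} | #|e| == 2%N].
  by move: g0; rewrite /gnp_prob; case: ifP; rewrite ?eqxx.
by rewrite selT induced_setT.
Qed.

Lemma coupled_dist_final f G : coupled_dist n f G = gnp_prob p G * sfap_dist R G n f.
Proof.
rewrite /coupled_dist; under eq_bigr do rewrite -mulrA mulrC induced_selected_final.
rewrite (bigD1 G) //= eqxx mulr1 big1 ?addr0 // => E /negbTE->.
by rewrite mulr0.
Qed.

Lemma explore_lawE E (A : {ffun 'I_K -> {set 'I_n}}) :
  explore_law p E A = \sum_(f | freq_sets f == A) explore_dist p n (f, E).
Proof.
rewrite /explore_law big_mkcond (eq_bigr (fun s => if (s.2 == E) && (freq_sets s.1 == A)
  then explore_dist p n (s.1, s.2) else 0)) => [|[] //].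
rewrite -(pair_bigA _ (fun f G => if (G == E) && (freq_sets f == A)
  then explore_dist p n (f, G) else 0)) [RHS]big_mkcond; apply: eq_bigr => f _.
by rewrite (bigD1 E) //= eqxx big1 ?addr0 // => G /negbTE->.
Qed.

Lemma sfap_lawE E (A : {ffun 'I_K -> {set 'I_n}}) :
  sfap_law p E A = \sum_(f | freq_sets f == A) gnp_prob p E * sfap_dist R E n f.
Proof.
rewrite /sfap_law (bigD1 E) //= [X in _ + X]big1 ?addr0 => [|E' /negbTE nE'].
  by apply: eq_bigl => f; rewrite eqxx.
by rewrite big1 // => f; rewrite nE'.
Qed.

End Coupling.

Theorem proposition3 (R : realFieldType) (n K : nat) (p : R) :
  (1 <= n)%N -> (1 <= K)%N -> 0 <= p -> p <= 1 ->
  forall (E : graph n) (A : {ffun 'I_K -> {set 'I_n}}),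
    explore_law p E A = sfap_law p E A.
Proof.
move=> _ _ _ _ E A; rewrite explore_lawE sfap_lawE; apply: eq_bigr => f _.
by rewrite explore_dist_coupled coupled_dist_final.
Qed.
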